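(* Let $R$ be an artinian ring and $\mathcal{S}$ a full subcategory of $\operatorname{Mod}R$ which is closed under direct sums and submodules and contains $R_R$, such that $\mathcal{S}$ has only finitely many indecomposable finitely generated objects up to isomorphism, say $M_1,\dots,M_n$. Let $M=M_1\oplus\cdots\oplus M_n$, $E=\operatorname{End}(M_R)$, $X\in\mathcal{S}$, $H=\operatorname{Hom}_R(M,X)$, $p:M^{(H)}\to X$, $(m_h)\mapsto\sum_h h(m_h)$, and $K=\ker p$. Then applying $\operatorname{Hom}_R(M,-)$ to $0\to K\to M^{(H)}\xrightarrow{p}X\to0$ yields a pure exact sequence of right $E$-modules $0\to\operatorname{Hom}_R(M,K)\to\operatorname{Hom}_R(M,M^{(H)})\to\operatorname{Hom}_R(M,X)\to0.$
   Context: $\operatorname{Hom}_R(M,Y)$ is a right $E$-module via composition, $(\varphi\cdot s)(m)=\varphi(s(m))$. A short exact sequence $0\to A\to B\xrightarrow{g}C\to0$ of right modules over a ring is pure exact if $\operatorname{Hom}(N,g)$ is surjective for every finitely presented right module $N$. *)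

From HB Require Import structures.
From mathcomp Require Import all_boot all_order all_algebra.
Set Implicit Arguments. Unset Strict Implicit. Unset Printing Implicit Defensive.
Import GRing.Theory.
Local Open Scope ring_scope.

(* Right R-modules are represented as left modules over the converse ring R^c:
   for x : V and a : R, the right action x.a is written  a *: x  (in R^c). *)

Section Defs.
Variable R : nzRingType.

Definition right_ideal (I : R -> Prop) :=
  I 0 /\ (forall x y, I x -> I y -> I (x + y)) /\ (forall x r, I x -> I (x * r)).
Definition left_ideal (I : R -> Prop) :=
  I 0 /\ (forall x y, I x -> I y -> I (x + y)) /\ (forall x r, I x -> I (r * x)).

Definition artinian :=
  (forall I : nat -> R -> Prop, (forall n, right_ideal (I n)) ->
     (forall n x, I n.+1 x -> I n x) ->
     exists n, forall m x, (n <= m)%N -> (I m x <-> I n x)) /\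
  (forall I : nat -> R -> Prop, (forall n, left_ideal (I n)) ->
     (forall n x, I n.+1 x -> I n x) ->
     exists n, forall m x, (n <= m)%N -> (I m x <-> I n x)).

Definition rlin (U V : lmodType R^c) (f : U -> V) :=
  forall (a : R^c) (x y : U), f (a *: x + y) = a *: f x + f y.

Definition riso (U V : lmodType R^c) :=
  exists f : U -> V, rlin f /\ bijective f.

Definition submod (V : lmodType R^c) (A : V -> Prop) :=
  A 0 /\ forall (a : R^c) x y, A x -> A y -> A (a *: x + y).

Definition fin_gen (V : lmodType R^c) :=
  exists n (g : 'I_n -> V), forall v : V,
    exists r : 'I_n -> R^c, v = \sum_(k < n) r k *: g k.

Definition indecomposable (V : lmodType R^c) :=
  (exists v : V, v <> 0) /\
  forall A B : V -> Prop, submod A -> submod B ->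
    (forall v, A v -> B v -> v = 0) ->
    (forall v, exists a b, A a /\ B b /\ v = a + b) ->
    (forall v, A v -> v = 0) \/ (forall v, B v -> v = 0).

Definition is_dsum (I : Type) (F : I -> lmodType R^c) (D : lmodType R^c)
    (u : forall i, F i -> D) :=
  (forall i, rlin (u i)) /\
  (forall d : D, exists n (iota : 'I_n -> I) (x : forall k, F (iota k)),
       d = \sum_(k < n) u (iota k) (x k)) /\
  (forall n (iota : 'I_n -> I) (x : forall k, F (iota k)), injective iota ->
       \sum_(k < n) u (iota k) (x k) = 0 -> forall k, x k = 0).

Definition closed_dsum (S : lmodType R^c -> Prop) :=
  forall (I : Type) (F : I -> lmodType R^c) (D : lmodType R^c)
    (u : forall i, F i -> D), (forall i, S (F i)) -> @is_dsum I F D u -> S D.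

(* closed under submodules (= subobjects, i.e. sources of monomorphisms) *)
Definition closed_sub (S : lmodType R^c -> Prop) :=
  forall (V W : lmodType R^c) (f : W -> V), S V -> rlin f -> injective f -> S W.

(* E = End(M_R), with product s t := s \o t. *)
Definition isEnd (M : lmodType R^c) (s : M -> M) := rlin s.

Definition rEmod (M : lmodType R^c) (N : zmodType) (act : N -> (M -> M) -> N) :=
  (forall s, isEnd s -> forall n n', act (n + n') s = act n s + act n' s) /\
  (forall s t, isEnd s -> isEnd t -> forall n,
       act n (fun m => s m + t m) = act n s + act n t) /\
  (forall s t, isEnd s -> isEnd t -> forall n, act n (s \o t) = act (act n s) t) /\
  (forall n, act n id = n).

(* finitely presented right E-module: exact sequence E^b -> E^a -> N -> 0,
   generators g_j, relation rows r_k generating all relations *)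
Definition fin_pres (M : lmodType R^c) (N : zmodType) (act : N -> (M -> M) -> N) :=
  exists a b (g : 'I_a -> N) (r : 'I_b -> 'I_a -> M -> M),
    (forall k j, isEnd (r k j)) /\
    (forall n, exists e : 'I_a -> M -> M,
        (forall j, isEnd (e j)) /\ n = \sum_(j < a) act (g j) (e j)) /\
    (forall k, \sum_(j < a) act (g j) (r k j) = 0) /\
    (forall e : 'I_a -> M -> M, (forall j, isEnd (e j)) ->
        \sum_(j < a) act (g j) (e j) = 0 ->
        exists c : 'I_b -> M -> M, (forall k, isEnd (c k)) /\
          forall j, e j = (fun m => \sum_(k < b) r k j (c k m))).

(* E-linear maps N -> Hom_R(M, Y), where Hom_R(M,Y) is a right E-module via
   (phi . s)(m) = phi (s m) *)
Definition EhomToHom (M : lmodType R^c) (N : zmodType) (act : N -> (M -> M) -> N)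
    (Y : lmodType R^c) (f : N -> M -> Y) :=
  (forall n, rlin (f n)) /\
  (forall n n', f (n + n') = (fun m => f n m + f n' m)) /\
  (forall n s, isEnd s -> f (act n s) = f n \o s).

End Defs.
Arguments is_dsum {R I} F D u.

(* Hom_R(M, p) is onto because every R-map h : M -> X is a coordinate of
   M^(H).  For purity, let f : N -> Hom_R(M, X) be E-linear with N generated by
   n_1, ..., n_a.  All values f x m lie in the finitely generated submodule Y of
   X spanned by the f n_j m_k, where the m_k generate M.  As R is artinian,
   submodules of Y satisfy the descending chain condition, so Y, which lies in
   S, splits into finitely many indecomposable summands, each isomorphic to
   some M_i.  Hence the inclusion Y -> X factors as Y -> M^k -> X, and each
   component M -> X of the second map lifts along p through M^(H); composing
   f with the resulting map Y -> M^(H) gives an E-linear lift of f. *)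

From HB Require Import structures.
From mathcomp Require Import all_boot all_order all_algebra.
From Stdlib Require Import ClassicalEpsilon Classical FunctionalExtensionality.
Set Implicit Arguments. Unset Strict Implicit. Unset Printing Implicit Defensive.
Import GRing.Theory.
Local Open Scope ring_scope.

Definition asbool (P : Prop) : bool := if excluded_middle_informative P then true else false.

Lemma asboolP (P : Prop) : reflect P (asbool P).
Proof. by rewrite /asbool; case: excluded_middle_informative => h; constructor. Qed.

Section Linear.
Variable R : nzRingType.
Implicit Types U V W : lmodType R^c.

Lemma rlinD U V (f : U -> V) : rlin f -> forall x y, f (x + y) = f x + f y.
Proof. by move=> hf x y; have := hf 1 x y; rewrite !scale1r. Qed.

Lemma rlin0 U V (f : U -> V) : rlin f -> f 0 = 0.
Proof. by move=> hf; apply: (addrI (f 0)); rewrite -rlinD // !addr0. Qed.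

Lemma rlinN U V (f : U -> V) : rlin f -> forall x, f (- x) = - f x.
Proof.
by move=> hf x; have := hf (-1) x 0; rewrite !addr0 rlin0 // addr0 !scaleN1r.
Qed.

Lemma rlinB U V (f : U -> V) : rlin f -> forall x y, f (x - y) = f x - f y.
Proof. by move=> hf x y; rewrite rlinD // rlinN. Qed.

Lemma rlin_sum U V (f : U -> V) : rlin f ->
  forall I (s : seq I) (F : I -> U), f (\sum_(i <- s) F i) = \sum_(i <- s) f (F i).
Proof.
move=> hf I s F; elim: s => [|i s IH]; first by rewrite !big_nil rlin0.
by rewrite !big_cons rlinD // IH.
Qed.

Lemma rlin_comp U V W (f : V -> W) (g : U -> V) : rlin f -> rlin g -> rlin (f \o g).
Proof. by move=> hf hg a x y; rewrite /= hg hf. Qed.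

Lemma rlin_can U V (f : U -> V) (g : V -> U) : rlin f -> cancel f g -> cancel g f -> rlin g.
Proof. by move=> hf fK gK a x y; apply: (can_inj fK); rewrite hf !gK. Qed.

Section Submodule.
Variables (W : lmodType R^c) (D : W -> Prop).
Hypothesis hD : submod D.

Lemma submod0 : D 0. Proof. by case: hD. Qed.

Lemma submodZD a x y : D x -> D y -> D (a *: x + y). Proof. by case: hD => _; apply. Qed.

Lemma submodZ a x : D x -> D (a *: x).
Proof. by move=> hx; have := submodZD a hx submod0; rewrite addr0. Qed.

Lemma submodD x y : D x -> D y -> D (x + y).
Proof. by move=> hx hy; have := submodZD 1 hx hy; rewrite scale1r. Qed.

Lemma submodB x y : D x -> D y -> D (x - y).
Proof. by move=> hx hy; have := submodZD (-1) hy hx; rewrite scaleN1r addrC. Qed.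

Lemma submod_sum I (s : seq I) (F : I -> W) : (forall i, D (F i)) -> D (\sum_(i <- s) F i).
Proof.
move=> hF; elim: s => [|i s IH]; first by rewrite big_nil; apply: submod0.
by rewrite big_cons; apply: submodD.
Qed.

Definition lin_on V (f : W -> V) :=
  forall a x y, D x -> D y -> f (a *: x + y) = a *: f x + f y.

Lemma lin_onD V (f : W -> V) : lin_on f -> forall x y, D x -> D y -> f (x + y) = f x + f y.
Proof. by move=> hf x y hx hy; have := hf 1 x y hx hy; rewrite !scale1r. Qed.

Lemma lin_on0 V (f : W -> V) : lin_on f -> f 0 = 0.
Proof.
move=> hf; apply: (addrI (f 0)); rewrite -(lin_onD hf) ?addr0 //; exact: submod0.
Qed.

Lemma rlin_lin_on V (f : W -> V) : rlin f -> lin_on f.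
Proof. by move=> hf a x y _ _; apply: hf. Qed.

End Submodule.

Lemma lin_on_comp U V W (D : U -> Prop) (A : V -> Prop) (f : U -> V) (g : V -> W) :
  lin_on D f -> (forall x, D x -> A (f x)) -> lin_on A g -> lin_on D (g \o f).
Proof. by move=> hf hfA hg a x y hx hy; rewrite /= hf // hg; auto. Qed.

Section Span.
Variable W : lmodType R^c.
Implicit Types (G : seq W) (v : W).

Definition in_span G v :=
  forall C : W -> Prop, submod C -> (forall g, g \in G -> C g) -> C v.

Lemma span_submod G : submod (in_span G).
Proof.
split=> [C hC _|a x y hx hy C hC hG]; first exact: submod0.
by apply: submodZD; [|apply: hx|apply: hy].
Qed.

Lemma span_mem G g : g \in G -> in_span G g.
Proof. by move=> hg C _; apply. Qed.

Lemma span_subset G G' v : (forall g, g \in G -> in_span G' g) ->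
  in_span G v -> in_span G' v.
Proof. by move=> hG hv; apply: hv (span_submod G') hG. Qed.

Lemma span_nil v : in_span [::] v -> v = 0.
Proof.
move=> hv; apply: (hv (fun v => v = 0)) => //.
by split=> // a x y -> ->; rewrite scaler0 addr0.
Qed.

Lemma span_consP g G v : in_span (g :: G) v -> exists r, in_span G (v - r *: g).
Proof.
move=> hv; apply: (hv (fun v => exists r, in_span G (v - r *: g))).
  split; first by exists 0; rewrite scale0r subr0; apply: submod0 (span_submod G).
  move=> a x y [r hx] [s hy]; exists (a * r + s).
  rewrite scalerDl -scalerA opprD addrACA -scalerBr.
  exact: (submodZD (span_submod G)).
move=> w; rewrite inE => /orP[/eqP->|hw].
  by exists 1; rewrite scale1r subrr; apply: submod0 (span_submod G).
by exists 0; rewrite scale0r subr0; apply: span_mem.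
Qed.

Lemma span_coords G v : in_span G v ->
  exists r : nat -> R^c, v = \sum_(k < size G) r k *: G`_k.
Proof.
elim: G v => [|g G IH] v; first by move=> /span_nil ->; exists (fun=> 0); rewrite big_ord0.
move=> /span_consP [r /IH [s hs]]; exists (fun k => if k is k'.+1 then s k' else r).
by rewrite big_ord_recl /= -hs addrC subrK.
Qed.

Lemma fin_gen_span : fin_gen W -> exists G, forall v, in_span G v.
Proof.
case=> n [g hg]; exists [seq g i | i <- enum 'I_n] => v.
have [r ->] := hg v; apply: (submod_sum (span_submod _)) => i.
by apply: (submodZ (span_submod _)); apply: span_mem; apply: map_f; rewrite mem_enum.
Qed.

Lemma span_fin_gen G : (forall v, in_span G v) -> fin_gen W.
Proof.
move=> hG; exists (size G), (fun k => G`_k) => v.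
by have [r hr] := span_coords (hG v); exists (fun k => r k).
Qed.

End Span.

Lemma span_image W V (D : W -> Prop) (f : W -> V) G v : submod D -> lin_on D f ->
  (forall g, g \in G -> D g) -> in_span G v -> in_span (map f G) (f v).
Proof.
move=> hD hf hG; have hGf : forall g, g \in G -> in_span (map f G) (f g).
  by move=> g hg; apply: span_mem; apply: map_f.
have: submod (fun v => D v /\ in_span (map f G) (f v)).
  split; first by split; [apply: submod0 | rewrite (lin_on0 hD hf); apply: submod0 (span_submod _)].
  move=> a x y [hx hfx] [hy hfy]; split; first exact: (submodZD hD).
  by rewrite hf //; apply: (submodZD (span_submod _)).
by move=> hC /(_ _ hC (fun g hg => conj (hG g hg) (hGf g hg))) [].
Qed.

Lemma span_image_rlin W V (f : W -> V) G v : rlin f -> in_span G v -> in_span (map f G) (f v).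
Proof.
by move=> hf; apply: span_image (rlin_lin_on (D := fun _ => True) hf) _ => //; split.
Qed.

End Linear.

Lemma chain_mono T (C : nat -> T -> Prop) : (forall t x, C t.+1 x -> C t x) ->
  forall s t x, (s <= t)%N -> C t x -> C s x.
Proof.
move=> hC s t x; elim: t => [|t IH]; first by rewrite leqn0 => /eqP ->.
by rewrite leq_eqVlt => /orP[/eqP -> //|hst] h; apply: IH => //; apply: hC.
Qed.

Section Artinian.
Variable R : nzRingType.
Hypothesis hart : artinian R.
Variable W : lmodType R^c.

(* Induction on the number of generators: a chain in [span (g :: G)] is
   controlled by its trace on [span G] and by the right ideals of the
   coefficients of [g] in it. *)
Lemma span_dcc G (C : nat -> W -> Prop) : (forall t, submod (C t)) ->
  (forall t x, C t.+1 x -> C t x) -> (forall t x, C t x -> in_span G x) ->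
  exists N, forall t x, (N <= t)%N -> C N x -> C t x.
Proof.
elim: G C => [|g G IH] C hC Cdec CG.
  by exists 0%N => t x _ /CG /span_nil ->; apply: submod0.
pose Cr t x := C t x /\ in_span G x.
have Crdec t x : Cr t.+1 x -> Cr t x by case=> hx hGx; split => //; apply: Cdec.
have [N1 hN1] : exists N, forall t x, (N <= t)%N -> Cr N x -> Cr t x.
  apply: IH Crdec _ => [t|t x []] //.
  split; first by split; [apply: submod0 | apply: submod0 (span_submod G)].
  move=> a x y [hx hGx] [hy hGy]; split; first exact: (submodZD (hC t)).
  exact: (submodZD (span_submod G)).
pose I t (r : R) := exists c, C t c /\ in_span G (c - (r : R^c) *: g).
have Idec t r : I t.+1 r -> I t r by case=> c [hc hcG]; exists c; split => //; apply: Cdec.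
have [N2 hN2] : exists N, forall t r, (N <= t)%N -> (I t r <-> I N r).
  apply: hart.1 Idec => t.
  split.
    exists 0; rewrite scale0r subr0.
    by split; [apply: submod0 | apply: submod0 (span_submod G)].
  split=> [r s [c [hc hcG]] [d [hd hdG]]|r s [c [hc hcG]]].
    exists (c + d); split; first exact: (submodD (hC t)).
    by rewrite scalerDl opprD addrACA; apply: (submodD (span_submod G)).
  exists ((s : R^c) *: c); split; first exact: (submodZ (hC t)).
  rewrite (_ : ((r * s : R) : R^c) = (s : R^c) * r) // -scalerA -scalerBr.
  exact: (submodZ (span_submod G)).
exists (maxn N1 N2) => t x ht hx.
have [r hr] := span_consP (CG _ _ hx).
have [c [hc hcG]] : I t r.
  apply/(hN2 _ _ (leq_trans (leq_maxr _ _) ht)).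
  by apply: (chain_mono Idec (leq_maxr N1 N2)); exists x.
have hxc : Cr N1 (x - c).
  apply: (chain_mono Crdec (leq_maxl N1 N2)); split.
    by apply: (submodB (hC _)) hx _; apply: (chain_mono Cdec ht).
  have -> : x - c = (x - r *: g) - (c - r *: g) by rewrite opprB addrA subrK.
  exact: (submodB (span_submod G)).
have [hxct _] := hN1 t _ (leq_trans (leq_maxl _ _) ht) hxc.
by rewrite -(subrK c x); apply: (submodD (hC t)).
Qed.

Lemma span_strict_ind (Q : seq W -> Prop) :
  (forall G, (forall G', (forall v, in_span G' v -> in_span G v) ->
                 (exists v, in_span G v /\ ~ in_span G' v) -> Q G') -> Q G) ->
  forall G, Q G.
Proof.
move=> step G0; apply: NNPP => nQ0.
have down (G : {G | ~ Q G}) : {G' : {G | ~ Q G} |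
    (forall v, in_span (sval G') v -> in_span (sval G) v) /\
    exists v, in_span (sval G) v /\ ~ in_span (sval G') v}.
  apply: constructive_indefinite_description.
  case: G => G nQ /=; apply: NNPP => h; apply: nQ; apply: step => G' sub strict.
  by apply: NNPP => nQ'; apply: h; exists (exist _ G' nQ').
pose chain := fix chain t := if t is t'.+1 then sval (down (chain t')) else exist _ G0 nQ0.
pose C t := in_span (sval (chain t)).
have Cdec t x : C t.+1 x -> C t x by case: (svalP (down (chain t))) => h _; apply: h.
have [N hN] := span_dcc (fun t => span_submod _) Cdec
  (fun t x => chain_mono Cdec (leq0n t)).
have [_ [v [hv nv]]] := svalP (down (chain N)).
exact: nv (hN N.+1 v (leqnSn N) hv).
Qed.

End Artinian.

Section Complement.
Variables (R : nzRingType) (V : lmodType R^c) (A B : V -> Prop).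
Hypotheses (hA : submod A) (hB : submod B).
Hypothesis disjAB : forall v, A v -> B v -> v = 0.
Hypothesis coverAB : forall v, exists a b, A a /\ B b /\ v = a + b.

Lemma complement_proj : exists pi : V -> V, rlin pi /\ forall v, A (pi v) /\ B (v - pi v).
Proof.
have uniq a b a' b' : A a -> B b -> A a' -> B b' -> a + b = a' + b' -> a = a'.
  move=> ha hb ha' hb' e; apply/eqP; rewrite -subr_eq0; apply/eqP.
  apply: disjAB; first exact: submodB.
  have -> : a - a' = b' - b by apply/eqP; rewrite subr_eq addrAC (addrC b') -e addrK.
  exact: submodB.
have pick v : {a | A a /\ B (v - a)}.
  apply: constructive_indefinite_description.
  by have [a [b [ha [hb ->]]]] := coverAB v; exists a; rewrite (addrC a) addrK.
exists (fun v => sval (pick v)); split; last by move=> v; case: (pick v).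
move=> c x y; case: (pick x) => a [ha hb]; case: (pick y) => a' [ha' hb'].
case: (pick _) => a'' [ha'' hb''] /=.
apply: (uniq _ _ _ _ ha'' hb'' (submodZD hA c ha ha') (submodZD hB c hb hb')).
by rewrite addrC subrK addrACA -scalerDr !subrKC.
Qed.

End Complement.

Lemma not_indecomposable (R : nzRingType) (V : lmodType R^c) : ~ indecomposable V ->
  (forall v : V, v = 0) \/
  exists A B : V -> Prop, [/\ submod A, submod B,
    forall v, A v -> B v -> v = 0, forall v, exists a b, A a /\ B b /\ v = a + b &
    (exists a, A a /\ a <> 0) /\ (exists b, B b /\ b <> 0)].
Proof.
have nonzero (C : V -> Prop) : ~ (forall v, C v -> v = 0) -> exists c, C c /\ c <> 0.
  by move=> nC; apply: NNPP => h; apply: nC => v hv; apply: NNPP => nv; apply: h; exists v.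
move=> hnot; case: (classic (forall v : V, v = 0)) => [h0|h0]; [by left | right].
apply: NNPP => hno; apply: hnot; split.
  by have [v [_ hv]] := nonzero (fun _ => True) (fun h => h0 (fun v => h v I)); exists v.
move=> A B hA hB dis cov; apply: NNPP => /not_or_and [nA nB]; apply: hno.
by exists A, B; split => //; split; apply: nonzero.
Qed.

Section DirectSum.
Local Unset Implicit Arguments.
Variables (R : nzRingType) (n : nat) (Ms : 'I_n -> lmodType R^c).
Variables (M : lmodType R^c) (iM : forall i, Ms i -> M).
Hypothesis hM : is_dsum Ms M iM.

Definition dsum_cast (j i : 'I_n) (x : Ms j) : Ms i :=
  if j =P i is ReflectT e then ecast i (Ms i) e x else 0.

Lemma iM_dsum_cast (j i : 'I_n) (x : Ms j) : iM i (dsum_cast j i x) = if j == i then iM j x else 0.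
Proof.
rewrite /dsum_cast; case: eqP => [e|_]; first by subst.
by rewrite (rlin0 (hM.1 i)).
Qed.

Lemma dsum_cast_id (i : 'I_n) (x : Ms i) : dsum_cast i i x = x.
Proof. by rewrite /dsum_cast; case: eqP => // e; rewrite (eq_irrelevance e (erefl i)). Qed.

Lemma sum_iM_dsum_cast (j : 'I_n) (x : Ms j) : \sum_(i < n) iM i (dsum_cast j i x) = iM j x.
Proof.
under eq_bigr do rewrite iM_dsum_cast.
by rewrite -big_mkcond /=; apply: big_pred1 => i; rewrite /= eq_sym.
Qed.

Lemma dsum_coords m : exists y : forall i, Ms i, m = \sum_(i < n) iM i (y i).
Proof.
have [N [iota [x ->]]] := hM.2.1 m.
exists (fun i => \sum_(k < N) dsum_cast (iota k) i (x k)).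
under [RHS]eq_bigr do rewrite (rlin_sum (hM.1 _)).
by rewrite exchange_big /=; apply: eq_bigr => k _; rewrite sum_iM_dsum_cast.
Qed.

Lemma dsum_coords_uniq (y y' : forall i, Ms i) :
  \sum_(i < n) iM i (y i) = \sum_(i < n) iM i (y' i) -> forall i, y i = y' i.
Proof.
move=> e i; apply/eqP; rewrite -subr_eq0; apply/eqP.
apply: (hM.2.2 n id (fun k => y k - y' k)) => //.
by under eq_bigr do rewrite (rlinB (hM.1 _)); rewrite sumrB e subrr.
Qed.

Lemma dsum_proj i : exists pi : M -> Ms i, rlin pi /\ cancel (iM i) pi.
Proof.
pose y m := sval (constructive_indefinite_description _ (dsum_coords m)).
have yE m : m = \sum_(j < n) iM j (y m j).
  by rewrite /y; case: constructive_indefinite_description.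
exists (fun m => y m i); split=> [a x z|x].
  apply: (dsum_coords_uniq (y (a *: x + z)) (fun j => a *: y x j + y z j)).
  rewrite -yE; under [RHS]eq_bigr do rewrite (hM.1 _).
  by rewrite big_split /= -scaler_sumr -!yE.
rewrite (dsum_coords_uniq (y (iM i x)) (fun j => dsum_cast i j x) _ i) ?dsum_cast_id //.
by rewrite -yE sum_iM_dsum_cast.
Qed.

Lemma dsum_span : (forall i, fin_gen (Ms i)) -> exists GM : seq M, forall m, in_span GM m.
Proof.
move=> hfg; have hG i : {G : seq (Ms i) | forall v, in_span G v}.
  exact: constructive_indefinite_description (fin_gen_span (hfg i)).
exists (flatten [seq map (iM i) (sval (hG i)) | i <- enum 'I_n]) => m C hC hGC.
have [y ->] := dsum_coords m; apply: (submod_sum hC) => i.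
apply: (span_image_rlin (hM.1 i) (svalP (hG i) (y i))) => // g /mapP [x hx ->].
apply: hGC; apply/flatten_mapP.
by exists i; [rewrite mem_enum | apply: map_f].
Qed.

End DirectSum.

Section SpanType.
Variables (R : nzRingType) (W : lmodType R^c) (G : seq W).

Definition span_pred : pred W := fun w => asbool (in_span G w).

Lemma span_predP w : reflect (in_span G w) (w \in span_pred).
Proof. exact: asboolP. Qed.

Lemma span_pred_closed : subsemimod_closed span_pred.
Proof.
have hS := span_submod G.
split; first split.
- by apply/span_predP; apply: (submod0 hS).
- by move=> x y /span_predP hx /span_predP hy; apply/span_predP; apply: submodD hS _ _ hx hy.
- by move=> a x /span_predP hx; apply/span_predP; apply: submodZ hS _ _ hx.
Qed.

HB.instance Definition _ := GRing.isSubmodClosed.Build _ _ span_pred span_pred_closed.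

Definition span_type := {w : W | w \in span_pred}.
HB.instance Definition _ := [isSub of span_type for val].
HB.instance Definition _ := [Choice of span_type by <:].
HB.instance Definition _ := [SubChoice_isSubLmodule of span_type by <:].

Definition to_span (v : W) : span_type := insubd 0 v.

Lemma to_spanK v : in_span G v -> val (to_span v) = v.
Proof. by move=> hv; rewrite val_insubd; case: span_predP. Qed.

Lemma val_to_span (d : span_type) : to_span (val d) = d.
Proof. exact: valKd. Qed.

Lemma in_span_val (d : span_type) : in_span G (val d).
Proof. exact/span_predP/valP. Qed.

Lemma rlin_val : rlin (val : span_type -> W).
Proof. by []. Qed.

Lemma lin_on_to_span : lin_on (in_span G) to_span.
Proof.
move=> a x y hx hy; apply: val_inj.
by rewrite /= !to_spanK //; apply: submodZD (span_submod G) _ _ _ hx hy.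
Qed.

Lemma span_type_fin_gen : fin_gen span_type.
Proof.
apply: (@span_fin_gen _ _ (map to_span G)) => d.
rewrite -(val_to_span d); apply: span_image (span_submod G) lin_on_to_span _ (in_span_val d).
exact: span_mem.
Qed.

End SpanType.

Section SpanProjection.
Variables (R : nzRingType) (W : lmodType R^c) (G : seq W).
Variable pi : span_type G -> span_type G.
Hypothesis hpi : rlin pi.

Definition span_proj (v : W) : W := val (pi (to_span G v)).

Lemma lin_on_span_proj : lin_on (in_span G) span_proj.
Proof. by move=> a x y hx hy; rewrite /span_proj lin_on_to_span // hpi. Qed.

Lemma span_proj_image v : in_span G v -> in_span (map span_proj G) (span_proj v).
Proof.
by apply: span_image (span_submod G) lin_on_span_proj _ => g; apply: span_mem.
Qed.

Lemma span_proj_subset v : in_span (map span_proj G) v -> in_span G v.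
Proof. by apply=> [|_ /mapP [g _ ->]]; [apply: span_submod | apply: in_span_val]. Qed.

(* The span of the projected generators stays inside [A], hence misses [d0]. *)
Lemma span_proj_strict (A : span_type G -> Prop) (d0 : span_type G) :
  submod A -> (forall d, A (pi d)) -> ~ A d0 ->
  exists v, in_span G v /\ ~ in_span (map span_proj G) v.
Proof.
move=> hA hpiA nd0; exists (val d0); split; first exact: in_span_val.
move=> /(_ (fun v => in_span G v /\ A (to_span G v))) [] //; last by rewrite val_to_span.
  split; first split; first exact: (submod0 (span_submod G)).
    by rewrite (lin_on0 (span_submod G) (@lin_on_to_span _ _ G)); apply: submod0.
  move=> a x y [hx hAx] [hy hAy]; split; first exact: (submodZD (span_submod G)).
  by rewrite lin_on_to_span //; apply: submodZD.
move=> _ /mapP [g _ ->]; rewrite /span_proj val_to_span.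
by split; [apply: in_span_val | apply: hpiA].
Qed.

End SpanProjection.

Section Retract.
Variables (R : nzRingType) (M W : lmodType R^c).

(* [D] is a retract of a finite power of [M]: the inclusion [D -> W] factors
   as [D -> M^k -> W], through maps [W -> M] that are linear on [D]. *)
Definition M_retract (D : W -> Prop) :=
  exists s : seq ((W -> M) * {g : M -> W | rlin g}),
    List.Forall (fun fg => lin_on D fg.1) s /\
    forall w, D w -> w = \sum_(fg <- s) sval fg.2 (fg.1 w).

Lemma M_retract0 D : (forall w, D w -> w = 0) -> M_retract D.
Proof. by move=> h0; exists [::]; split=> // w /h0 ->; rewrite big_nil. Qed.

Lemma M_retract_dsum (D A B : W -> Prop) (piA piB : W -> W) :
  lin_on D piA -> lin_on D piB ->
  (forall v, D v -> A (piA v)) -> (forall v, D v -> B (piB v)) ->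
  (forall v, D v -> v = piA v + piB v) ->
  M_retract A -> M_retract B -> M_retract D.
Proof.
move=> lA lB hA hB hAB [sA [lsA eA]] [sB [lsB eB]].
exists (map (fun fg => (fg.1 \o piA, fg.2)) sA ++ map (fun fg => (fg.1 \o piB, fg.2)) sB).
split.
  apply/List.Forall_app; split; apply/List.Forall_map.
    by apply: List.Forall_impl lsA => fg; apply: lin_on_comp.
  by apply: List.Forall_impl lsB => fg; apply: lin_on_comp.
by move=> w hw; rewrite big_cat !big_map -eA -?eB; auto.
Qed.

End Retract.

Section FiniteRepresentationType.
Local Unset Implicit Arguments.
Variable R : nzRingType.
Hypothesis hart : artinian R.
Variable S : lmodType R^c -> Prop.
Hypothesis hsub : closed_sub S.
Variables (n : nat) (Ms : 'I_n -> lmodType R^c).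
Hypothesis hMsall : forall V : lmodType R^c, S V -> fin_gen V -> indecomposable V ->
  exists i, riso V (Ms i).
Variables (M : lmodType R^c) (iM : forall i, Ms i -> M).
Hypothesis hM : is_dsum Ms M iM.
Variables (W : lmodType R^c) (hW : S W).

Lemma iso_M_retract (G : seq W) i : riso (span_type G) (Ms i) -> M_retract M (in_span G).
Proof.
case=> f [hf [finv fK finvK]]; have [pi [hpi piK]] := dsum_proj _ _ _ _ _ hM i.
have hg : rlin (val \o finv \o pi).
  exact: rlin_comp (rlin_comp (@rlin_val _ _ G) (rlin_can hf fK finvK)) hpi.
exists [:: (fun w => iM i (f (to_span G w)), exist _ _ hg)]; split.
  apply: List.Forall_cons => //= a x y hx hy.
  by rewrite lin_on_to_span // hf (hM.1 i).
by move=> w hw; rewrite big_seq1 /= piK fK to_spanK.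
Qed.

Lemma span_M_retract (G : seq W) : M_retract M (in_span G).
Proof.
elim/(span_strict_ind hart): G => G IH.
have hSG : S (span_type G) := hsub _ _ val hW (@rlin_val _ _ G) val_inj.
have [hind|] := classic (indecomposable (span_type G)).
  have [i hi] := hMsall _ hSG (span_type_fin_gen G) hind.
  exact: iso_M_retract hi.
case/not_indecomposable => [h0|[A [B [hA hB dAB cAB [[a0 [ha0 nza0]] [b0 [hb0 nzb0]]]]]]].
  by apply: M_retract0 => w hw; rewrite -(to_spanK hw) (h0 (to_span G w)).
have [pi [hpi hpiAB]] := complement_proj hA hB dAB cAB.
have hpi' : rlin (fun d => d - pi d).
  by move=> a x y; rewrite hpi scalerBr addrACA opprD.
apply: (M_retract_dsum (piA := span_proj pi) (piB := span_proj (fun d => d - pi d))).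
- exact: lin_on_span_proj.
- exact: lin_on_span_proj.
- exact: span_proj_image.
- exact: span_proj_image.
- move=> v hv; rewrite /span_proj -(rlinD (@rlin_val _ _ G)) subrKC to_spanK //.
- apply: IH; first exact: span_proj_subset.
  apply: (span_proj_strict (A := A) (d0 := b0)) => // [d|hAb0]; first by case: (hpiAB d).
  exact: nzb0 (dAB _ hAb0 hb0).
- apply: IH; first exact: span_proj_subset.
  apply: (span_proj_strict (A := B) (d0 := a0)) => // [d|hBa0]; first by case: (hpiAB d).
  exact: nza0 (dAB _ ha0 hBa0).
Qed.

End FiniteRepresentationType.

Section Lift.
Variables (R : nzRingType) (M X P : lmodType R^c).
Variable u : {h : M -> X | rlin h} -> M -> P.
Hypothesis hu : forall h, rlin (u h).
Variable p : P -> X.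
Hypotheses (hp : rlin p) (hpu : forall h m, p (u h m) = sval h m).

Definition retract_lift (s : seq ((X -> M) * {h : M -> X | rlin h})) (w : X) : P :=
  \sum_(fg <- s) u fg.2 (fg.1 w).

Lemma lin_on_retract_lift (D : X -> Prop) s :
  List.Forall (fun fg => lin_on D fg.1) s -> lin_on D (retract_lift s).
Proof.
rewrite /retract_lift; elim=> [|fg s' hfg _ IH] a x y hx hy.
  by rewrite !big_nil scaler0 addr0.
by rewrite !big_cons hfg // hu IH // scalerDr addrACA.
Qed.

Lemma p_retract_lift s w : p (retract_lift s w) = \sum_(fg <- s) sval fg.2 (fg.1 w).
Proof. by rewrite (rlin_sum hp); apply: eq_bigr => fg _; rewrite hpu. Qed.

End Lift.

Section EHom.
Variables (R : nzRingType) (M : lmodType R^c) (N : zmodType).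
Variable act : N -> (M -> M) -> N.

Lemma EhomToHom_sum (Y : lmodType R^c) (f : N -> M -> Y) : EhomToHom act f ->
  forall I (s : seq I) (F : I -> N) m, f (\sum_(i <- s) F i) m = \sum_(i <- s) f (F i) m.
Proof.
move=> [_ [hfD _]] I s F m; elim: s => [|i s IH]; last by rewrite !big_cons hfD IH.
have := congr1 (fun F => F m) (hfD 0 0); rewrite addr0 !big_nil => e.
by apply: (addrI (f 0 m)); rewrite addr0 -e.
Qed.

Lemma EhomToHom_comp (Y Z : lmodType R^c) (D : Y -> Prop) (f : N -> M -> Y) (L : Y -> Z) :
  EhomToHom act f -> lin_on D L -> (forall x m, D (f x m)) ->
  EhomToHom act (fun x => L \o f x).
Proof.
move=> [hf1 [hf2 hf3]] hL hfD; split; first by move=> x a m m'; rewrite /= hf1 hL.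
split=> [x x'|x t ht]; last by rewrite hf3.
by apply: functional_extensionality => m; rewrite /= hf2 (lin_onD hL).
Qed.

Lemma EhomToHom_span (Y : lmodType R^c) (f : N -> M -> Y) a (g : 'I_a -> N) (GM : seq M) :
  EhomToHom act f -> (forall m, in_span GM m) ->
  (forall x, exists e : 'I_a -> M -> M,
     (forall j, isEnd (e j)) /\ x = \sum_(j < a) act (g j) (e j)) ->
  exists G0 : seq Y, forall x m, in_span G0 (f x m).
Proof.
move=> hf hGM hgen; exists (flatten [seq map (f (g j)) GM | j <- enum 'I_a]) => x m.
have [e [he ->]] := hgen x; rewrite EhomToHom_sum //.
apply: (submod_sum (span_submod _)) => j; rewrite hf.2.2 //=.
apply: span_subset (span_image_rlin (hf.1 (g j)) (hGM (e j m))) => _ /mapP [y hy ->].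
apply: span_mem; apply/flatten_mapP.
by exists j; [rewrite mem_enum | apply: map_f].
Qed.

End EHom.

Lemma factor_through_kernel (R : nzRingType) (M K P X : lmodType R^c)
    (k : K -> P) (p : P -> X) (psi : M -> P) :
  rlin k -> injective k -> (forall y, p y = 0 <-> exists z, k z = y) ->
  rlin psi -> p \o psi = (fun _ => 0) -> exists phi : M -> K, rlin phi /\ k \o phi = psi.
Proof.
move=> hk kinj hker hpsi e.
have hex m : exists z, k z = psi m by apply/hker; exact: (congr1 (fun F => F m) e).
pose phi m := sval (constructive_indefinite_description _ (hex m)).
have phiK m : k (phi m) = psi m by rewrite /phi; case: constructive_indefinite_description.
exists phi; split; last by apply: functional_extensionality => m; apply: phiK.
by move=> a x y; apply: kinj; rewrite hk !phiK hpsi.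
Qed.

Theorem lemma11 (R : nzRingType) (S : lmodType R^c -> Prop)
  (hart : artinian R) (hds : closed_dsum S) (hsub : closed_sub S)
  (hR : S (R^c)^o)
  (n : nat) (Ms : 'I_n -> lmodType R^c)
  (hMsS : forall i, S (Ms i)) (hMsfg : forall i, fin_gen (Ms i))
  (hMsind : forall i, indecomposable (Ms i))
  (hMsdist : forall i j, i <> j -> ~ riso (Ms i) (Ms j))
  (hMsall : forall V : lmodType R^c, S V -> fin_gen V -> indecomposable V ->
             exists i, riso V (Ms i))
  (M : lmodType R^c) (iM : forall i, Ms i -> M) (hM : is_dsum Ms M iM)
  (X : lmodType R^c) (hX : S X)
  (P : lmodType R^c) (u : {h : M -> X | rlin h} -> M -> P)
  (hP : is_dsum (fun _ => M) P u)
  (p : P -> X) (hp : rlin p) (hpu : forall h m, p (u h m) = sval h m)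
  (K : lmodType R^c) (k : K -> P) (hk : rlin k) (hkinj : injective k)
  (hker : forall y, p y = 0 <-> exists z, k z = y) :
  (* exactness of 0 -> Hom(M,K) -> Hom(M,P) -> Hom(M,X) -> 0 *)
  (forall phi phi' : M -> K, rlin phi -> rlin phi' -> k \o phi = k \o phi' -> phi = phi') /\
  (forall phi : M -> K, rlin phi -> p \o (k \o phi) = (fun _ => 0)) /\
  (forall psi : M -> P, rlin psi -> p \o psi = (fun _ => 0) ->
     exists phi : M -> K, rlin phi /\ k \o phi = psi) /\
  (forall phi : M -> X, rlin phi -> exists psi : M -> P, rlin psi /\ p \o psi = phi) /\
  (* purity: Hom_E(N, Hom(M,p)) surjective for every f.p. right E-module N *)
  (forall (N : zmodType) (act : N -> (M -> M) -> N),
     rEmod act -> fin_pres act ->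
     forall f : N -> M -> X, EhomToHom act f ->
     exists f' : N -> M -> P, EhomToHom act f' /\ forall x, p \o f' x = f x).
Proof.
split; [|split; [|split; [|split]]].
- move=> phi phi' _ _ e; apply: functional_extensionality => m.
  by apply: hkinj; exact: (congr1 (fun F => F m) e).
- by move=> phi _; apply: functional_extensionality => m /=; apply/hker; exists (phi m).
- by move=> psi; apply: factor_through_kernel.
- move=> phi hphi; exists (u (exist _ phi hphi)); split; first exact: hP.1.
  by apply: functional_extensionality => m /=; rewrite hpu.
- move=> N act _ [a [_ [g [_ [_ [hgen _]]]]]] f hf.
  have [GM hGM] := dsum_span _ _ _ _ _ hM hMsfg.
  have [G0 hG0] := EhomToHom_span hf hGM hgen.
  have [s [ls es]] := span_M_retract _ hart _ hsub _ _ hMsall _ _ hM _ hX G0.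
  exists (fun x => retract_lift u s \o f x); split.
    exact: EhomToHom_comp hf (lin_on_retract_lift hP.1 ls) hG0.
  by move=> x; apply: functional_extensionality => m /=; rewrite p_retract_lift // -es.
Qed.
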